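(* Let $\Theta$ be a variety, $H\in\Theta$, $X=\{x_1,\dots,x_n\}\in\Gamma^0$, and let $s:W(X^0)\to W(X)$ be a special homomorphism. Then for every $X$-special formula $u=u(x_1,\dots,x_n;y_1,\dots,y_m)\in\Phi(X^0)$ and every point $\mu:W(X)\to H$ we have $u\in Tp^H(\mu)$ if and only if $s_*u\in LKer(\mu)$.
   Context: Fix a variety $\Theta$ of algebras; $X^0$ is an infinite set of variables, $\Gamma^0$ the set of its finite subsets, $W(X)$ the free $\Theta$-algebra on $X$. For $H\in\Theta$, points are homomorphisms $\mu:W(X)\to H$ (also for $X=X^0$). $\Phi(X^0)$ is the (one-sorted) algebra of first-order formulas, modulo logical equivalence, built from equalities $w\equiv w'$ ($w,w'\in W(X^0)$) with Boolean connectives and quantifiers $\exists x$, $x\in X^0$; $Val^{X^0}_H(u)$ is the set of $\eta:W(X^0)\to H$ satisfying $u$. For $X\in\Gamma^0$, $\Phi(X)$ is the $X$-sort of the multi-sorted algebra of formulas (the free multi-sorted Halmos algebra over $\Theta$ generated by equalities), with homomorphism $Val^X_H:\Phi(X)\to$ (subsets of $\mathrm{Hom}(W(X),H)$), and $LKer(\mu)=\{u\in\Phi(X):\mu\in Val^X_H(u)\}$. A homomorphism $s:W(X^0)\to W(X)$ is special if $s(x)=x$ for all $x\in X$; it induces $s_*:\Phi(X^0)\to\Phi(X)$ with $Val^X_H(s_*u)=\{\mu:W(X)\to H\mid \mu s\in Val^{X^0}_H(u)\}$. A formula $u\in\Phi(X^0)$ is $X$-special if every free variable of $u$ lies in $X$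 and every bound variable lies in $X^0\setminus X$ (not all of $X$ need occur). For $\mu:W(X)\to H$ with $a_i=\mu(x_i)$, $Tp^H(\mu)$ is the set of $X$-special formulas $u(x_1,\dots,x_n;y_1,\dots,y_m)$ such that $u(a_1,\dots,a_n;y_1,\dots,y_m)$ holds in $H$. *)

From HB Require Import structures.
From mathcomp Require Import all_boot.
From mathcomp Require Import finmap.

Set Implicit Arguments.
Unset Strict Implicit.
Unset Printing Implicit Defensive.

Local Open Scope fset_scope.

Section UniversalAlgebra.

Variable F : Type.
Variable ar : F -> nat.

Inductive term (A : Type) : Type :=
| Var : A -> term A
| Op : forall f : F, ('I_(ar f) -> term A) -> term A.
Arguments Var {A}.
Arguments Op {A} f.

Record algebra : Type := Algebra {
  carrier :> Type;
  op : forall f : F, ('I_(ar f) -> carrier) -> carrier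
}.
Arguments op {a} f.

Fixpoint eval (A : Type) (H : algebra) (e : A -> H) (t : term A) : H :=
  match t with
  | Var a => e a
  | Op f args => op f (fun i => eval e (args i))
  end.

(* The variety Theta is given by a set [Eqs] of identities (Birkhoff). *)
Variable Eqs : term nat * term nat -> Prop.

Definition in_variety (H : algebra) : Prop :=
  forall l r, Eqs (l, r) -> forall e : nat -> H, eval e l = eval e r.

(* Theta-equivalence of terms: w and w' are equal in the free Theta-algebra W(A). *)
Definition thetaeq (A : Type) (w w' : term A) : Prop :=
  forall H : algebra, in_variety H -> forall e : A -> H, eval e w = eval e w'.

(* Homomorphisms W(A) -> H : maps on representatives that respect the
   operations and Theta-equivalence (i.e. maps out of the quotient W(A)). *)
Record hom (A : Type) (H : algebra) : Type := Hom {
  hfun :> term A -> H;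
  hom_op : forall f (args : 'I_(ar f) -> term A),
      hfun (Op f args) = op f (fun i => hfun (args i));
  hom_eq : forall w w', thetaeq w w' -> hfun w = hfun w'
}.

(* Homomorphisms of free algebras W(B) -> W(A), on representatives. *)
Record freehom (B A : Type) : Type := FreeHom {
  ffun :> term B -> term A;
  fhom_op : forall f (args : 'I_(ar f) -> term B),
      thetaeq (ffun (Op f args)) (Op f (fun i => ffun (args i)));
  fhom_eq : forall w w', thetaeq w w' -> thetaeq (ffun w) (ffun w')
}.

Lemma comp_hom_op (A B : Type) (H : algebra) (mu : hom A H) (s : freehom B A) :
  forall f (args : 'I_(ar f) -> term B),
    mu (s (Op f args)) = op f (fun i => mu (s (args i))).
Proof.
move=> f args; rewrite (hom_eq mu (fhom_op s args)) hom_op //.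
Qed.

Lemma comp_hom_eq (A B : Type) (H : algebra) (mu : hom A H) (s : freehom B A) :
  forall w w', thetaeq w w' -> mu (s w) = mu (s w').
Proof. by move=> w w' e; apply: hom_eq; apply: fhom_eq. Qed.

Definition homcomp (A B : Type) (H : algebra) (mu : hom A H) (s : freehom B A)
  : hom B H := Hom (comp_hom_op mu s) (comp_hom_eq mu s).

Variable V : choiceType.

(* Elements of a finite subset X of X^0, i.e. the generators of W(X). *)
Definition elt (X : {fset V}) : Type := {x : V | x \in X}.

Inductive formula : Type :=
| FEq : term V -> term V -> formula
| FTrue : formula
| FFalse : formula
| FNot : formula -> formula
| FAnd : formula -> formula -> formula
| FOr : formula -> formula -> formula
| FImp : formula -> formula -> formula
| FEx : V -> formula -> formula
| FAll : V -> formula -> formula.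

Fixpoint Val0 (H : algebra) (u : formula) (eta : hom V H) {struct u} : Prop :=
  match u with
  | FEq w w' => eta w = eta w'
  | FTrue => True
  | FFalse => False
  | FNot p => ~ Val0 p eta
  | FAnd p q => Val0 p eta /\ Val0 q eta
  | FOr p q => Val0 p eta \/ Val0 q eta
  | FImp p q => Val0 p eta -> Val0 q eta
  | FEx x p => exists eta' : hom V H,
      (forall y, y <> x -> eta' (Var y) = eta (Var y)) /\ Val0 p eta'
  | FAll x p => forall eta' : hom V H,
      (forall y, y <> x -> eta' (Var y) = eta (Var y)) -> Val0 p eta'
  end.

Fixpoint occurs (A : Type) (x : A) (t : term A) : Prop :=
  match t with
  | Var y => y = x
  | Op f args => exists i, occurs x (args i)
  end.

Fixpoint free_in (x : V) (u : formula) : Prop :=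
  match u with
  | FEq w w' => occurs x w \/ occurs x w'
  | FTrue | FFalse => False
  | FNot p => free_in x p
  | FAnd p q | FOr p q | FImp p q => free_in x p \/ free_in x q
  | FEx y p | FAll y p => x <> y /\ free_in x p
  end.

Fixpoint bound_in (x : V) (u : formula) : Prop :=
  match u with
  | FEq _ _ | FTrue | FFalse => False
  | FNot p => bound_in x p
  | FAnd p q | FOr p q | FImp p q => bound_in x p \/ bound_in x q
  | FEx y p | FAll y p => y = x \/ bound_in x p
  end.

Definition Xspecial (X : {fset V}) (u : formula) : Prop :=
  (forall x, free_in x u -> x \in X) /\ (forall x, bound_in x u -> x \notin X).

Definition Tp (X : {fset V}) (H : algebra) (mu : hom (elt X) H) (u : formula)
  : Prop :=
  Xspecial X u /\
  forall eta : hom V H,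
    (forall x : elt X, eta (Var (val x)) = mu (Var x)) -> Val0 u eta.

Definition special (X : {fset V}) (s : freehom V (elt X)) : Prop :=
  forall x : elt X, thetaeq (s (Var (val x))) (Var x).

(* Terms of the free multi-sorted Halmos algebra generated by equalities
   (representatives; Val^X_H is invariant under the Halmos identities). *)
Inductive hform : {fset V} -> Type :=
| HEq (X : {fset V}) : term (elt X) -> term (elt X) -> hform X
| HTrue (X : {fset V}) : hform X
| HNot (X : {fset V}) : hform X -> hform X
| HAnd (X : {fset V}) : hform X -> hform X -> hform X
| HOr (X : {fset V}) : hform X -> hform X -> hform X
| HEx (X : {fset V}) : elt X -> hform X -> hform X
| HSub (X Y : {fset V}) : freehom (elt Y) (elt X) -> hform Y -> hform X.

Fixpoint ValX (H : algebra) (X : {fset V}) (p : hform X) : hom (elt X) H -> Prop :=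
  match p in hform X0 return hom (elt X0) H -> Prop with
  | HEq _ w w' => fun mu => mu w = mu w'
  | HTrue _ => fun _ => True
  | HNot _ q => fun mu => ~ ValX q mu
  | HAnd _ q r => fun mu => ValX q mu /\ ValX r mu
  | HOr _ q r => fun mu => ValX q mu \/ ValX r mu
  | HEx _ x q => fun mu => exists mu' : hom _ H,
      (forall y, y <> x -> mu' (Var y) = mu (Var y)) /\ ValX q mu'
  | HSub _ _ s q => fun mu => ValX q (homcomp mu s)
  end.

Definition LKer (H : algebra) (X : {fset V}) (mu : hom (elt X) H) (v : hform X)
  : Prop := ValX v mu.

End UniversalAlgebra.

(* [s_* u] holds at [mu] exactly when [u] holds at the point
   [mu s], which extends [mu] because [s] is special; this gives one
   direction.  Conversely every point [eta] of [W(X^0)] extending [mu] agrees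
   with [mu s] on [X], which contains every free variable of [u], and the
   truth of a formula depends only on the values of its free variables. *)

From Stdlib Require Import FunctionalExtensionality.
From mathcomp Require Import all_boot.
From mathcomp Require Import finmap.

Section Coincidence.
Context {F : Type} {ar : F -> nat} {Eqs : term ar nat * term ar nat -> Prop}.
Context {V : choiceType} {H : algebra ar}.
Hypothesis H_in_Theta : in_variety Eqs H.

Lemma hom_evalE {A : Type} (eta : hom Eqs A H) (t : term ar A) :
  eta t = eval (fun a => eta (Var ar a)) t.
Proof.
elim: t => [//|f args IH]; rewrite hom_op /=; congr (op _).
exact: functional_extensionality.
Qed.

Lemma eq_eval_occurs {A : Type} (e1 e2 : A -> H) (t : term ar A) :
  (forall a, occurs a t -> e1 a = e2 a) -> eval e1 t = eval e2 t.
Proof.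
elim: t => [a /= -> //|f args IH] /= e12; congr (op _).
apply: functional_extensionality => i; apply: IH => a Ia.
by apply: e12; exists i.
Qed.

Definition eval_hom (e : V -> H) : hom Eqs V H :=
  @Hom F ar Eqs V H (eval e) (fun _ _ => erefl) (fun w w' ww' => ww' H H_in_Theta e).

Definition agree_on (S : V -> Prop) (eta1 eta2 : hom Eqs V H) : Prop :=
  forall y, S y -> eta1 (Var ar y) = eta2 (Var ar y).

Lemma agree_on_sym {S eta1 eta2} : agree_on S eta1 eta2 -> agree_on S eta2 eta1.
Proof. by move=> e12 y /e12. Qed.

Lemma eq_hom_occurs (eta1 eta2 : hom Eqs V H) (t : term ar V) :
  agree_on (fun y => occurs y t) eta1 eta2 -> eta1 t = eta2 t.
Proof.
by move=> e12; rewrite (hom_evalE eta1) (hom_evalE eta2); apply: eq_eval_occurs.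
Qed.

Lemma agree_on_update {x : V} {S : V -> Prop} {eta1 eta2 eta' : hom Eqs V H} :
  agree_on (fun y => y <> x /\ S y) eta1 eta2 ->
  agree_on (fun y => y <> x) eta' eta1 ->
  exists2 eta'', agree_on (fun y => y <> x) eta'' eta2 & agree_on S eta' eta''.
Proof.
move=> e12 e'1.
exists (eval_hom (fun y => if y == x then eta' (Var ar x) else eta2 (Var ar y))).
  by move=> y /eqP/negbTE /= ->.
move=> y Sy /=; case: eqP => [-> //|/eqP/eqP yx].
by rewrite e'1 // e12.
Qed.

Lemma Val0_free (u : formula ar V) (eta1 eta2 : hom Eqs V H) :
  agree_on (fun y => free_in y u) eta1 eta2 -> (Val0 u eta1 <-> Val0 u eta2).
Proof.
elim: u eta1 eta2 => [w w'|||p IH|p IHp q IHq|p IHp q IHq|p IHp q IHq|x p IH|x p IH]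
  eta1 eta2 e12 /=.
- rewrite (@eq_hom_occurs eta1 eta2 w) ?(@eq_hom_occurs eta1 eta2 w') //.
  + by move=> y Oy; apply: e12; right.
  + by move=> y Oy; apply: e12; left.
- by [].
- by [].
- by rewrite (IH _ _ e12).
- by rewrite (IHp eta1 eta2) ?(IHq eta1 eta2) // => y Fy; apply: e12; [right|left].
- by rewrite (IHp eta1 eta2) ?(IHq eta1 eta2) // => y Fy; apply: e12; [right|left].
- by rewrite (IHp eta1 eta2) ?(IHq eta1 eta2) // => y Fy; apply: e12; [right|left].
- suff dir e e' : agree_on (fun y => free_in y (FEx x p)) e e' ->
      Val0 (FEx x p) e -> Val0 (FEx x p) e'.
    by split; apply: dir => //; apply: agree_on_sym.
  move=> ee' [eta' [e'e Hp]].
  have [eta'' e''e' e'e''] := agree_on_update ee' e'e.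
  by exists eta''; split; last exact/(IH _ _ e'e'').
- suff dir e e' : agree_on (fun y => free_in y (FAll x p)) e e' ->
      Val0 (FAll x p) e -> Val0 (FAll x p) e'.
    by split; apply: dir => //; apply: agree_on_sym.
  move=> ee' Hall eta' e'e'.
  have [eta'' e''e e'e''] := agree_on_update (agree_on_sym ee') e'e'.
  exact/(IH _ _ e'e'')/Hall.
Qed.

End Coincidence.

Lemma homcomp_special_Var {F : Type} {ar : F -> nat}
    {Eqs : term ar nat * term ar nat -> Prop} {V : choiceType} {H : algebra ar}
    {X : {fset V}} {s : freehom Eqs V (elt X)} (mu : hom Eqs (elt X) H) :
  special s -> forall x : elt X, homcomp mu s (Var ar (val x)) = mu (Var ar x).
Proof. by move=> s_special x /=; apply: hom_eq; apply: s_special. Qed.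

Theorem theorem3p2
  (F : Type) (ar : F -> nat)
  (Eqs : term ar nat * term ar nat -> Prop)          (* the variety Theta *)
  (V : choiceType) (V_infinite : forall s : seq V, exists v : V, v \notin s)  (* X^0 *)
  (H : algebra ar) (H_in_Theta : in_variety Eqs H)
  (X : {fset V})                                      (* X in Gamma^0 *)
  (s : freehom Eqs V (elt X)) (s_special : special s)
  (s_star : formula ar V -> hform Eqs X)
  (s_star_spec : forall (u : formula ar V) (mu : hom Eqs (elt X) H),
      ValX (H:=H) (s_star u) mu <-> Val0 u (homcomp mu s))
  (u : formula ar V) (u_special : Xspecial X u)
  (mu : hom Eqs (elt X) H) :
  Tp mu u <-> LKer mu (s_star u).
Proof.
have mus_Var := homcomp_special_Var mu s_special.
rewrite /Tp /LKer s_star_spec; split => [[_ Hall]|Hv]; first exact: Hall.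
split=> // eta eta_mu.
apply: (proj1 (Val0_free H_in_Theta u (homcomp mu s) eta _) Hv).
move=> x /(proj1 u_special) Xx.
by rewrite (mus_Var (exist _ x Xx)) -(eta_mu (exist _ x Xx)).
Qed.
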